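(* The set $\{\ket{\psi_{00}},\ket{\psi_{02}},\ket{\psi_{20}},\ket{\psi_{22}}\}$ of generalized Bell states in $\mathbb{C}^4\otimes\mathbb{C}^4$ is perfectly distinguishable by one-way LOCC using only projective measurements.
   Context: Generalized Bell states in $\mathbb{C}^4\otimes\mathbb{C}^4$ (Alice holds the first factor, Bob the second): $\ket{\psi_{nm}}=\frac12\sum_{j=0}^{3}e^{2\pi i jn/4}\ket{j}_A\ket{j\oplus_4 m}_B$ for $n,m\in\{0,1,2,3\}$, where $j\oplus_4 m=(j+m)\bmod 4$. Perfect distinguishability by one-way LOCC using only projective measurements means: one party performs a projective measurement on her subsystem, communicates the outcome classically, and the other party then performs a projective measurement (depending on that outcome) whose result identifies with certainty which state of the set was shared. *)

From mathcomp Require Import all_boot all_order all_algebra all_field.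
Set Implicit Arguments. Unset Strict Implicit. Unset Printing Implicit Defensive.
Import Order.TTheory GRing.Theory Num.Theory.
Local Open Scope ring_scope.

Definition adjmx (d : nat) (A : 'M[algC]_d) : 'M[algC]_d :=
  map_mx (fun x => x^*) A^T.

Definition is_proj_meas (d m : nat) (P : 'I_m -> 'M[algC]_d) : Prop :=
  (forall a, P a *m P a = P a /\ adjmx (P a) = P a) /\
  \sum_(a < m) P a = 1%:M.

(* A bipartite pure state in C^dA (x) C^dB is encoded by its coefficient
   matrix Psi : |Psi> = sum_{j,k} Psi j k |j>_A |k>_B.
   bprob Psi P Q = <Psi| P (x) Q |Psi>. *)
Definition bprob (dA dB : nat) (Psi : 'M[algC]_(dA, dB))
  (P : 'M[algC]_dA) (Q : 'M[algC]_dB) : algC :=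
  \sum_(j < dA) \sum_(k < dB) \sum_(j' < dA) \sum_(k' < dB)
    (Psi j k)^* * P j j' * Q k k' * Psi j' k'.

(* One-way LOCC, Alice measures first, Bob's measurement depends on Alice's
   outcome; guess a b identifies the state with certainty: every outcome
   pair of nonzero probability for state i leads to the guess i. *)
Definition oneway_AtoB (N dA dB : nat) (psi : 'I_N -> 'M[algC]_(dA, dB)) : Prop :=
  exists (m n : nat) (P : 'I_m -> 'M[algC]_dA) (Q : 'I_m -> 'I_n -> 'M[algC]_dB)
         (guess : 'I_m -> 'I_n -> 'I_N),
    is_proj_meas P /\ (forall a, is_proj_meas (Q a)) /\
    forall i a b, bprob (psi i) (P a) (Q a b) != 0 -> guess a b = i.

Definition oneway_BtoA (N dA dB : nat) (psi : 'I_N -> 'M[algC]_(dA, dB)) : Prop :=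
  exists (m n : nat) (Q : 'I_m -> 'M[algC]_dB) (P : 'I_m -> 'I_n -> 'M[algC]_dA)
         (guess : 'I_m -> 'I_n -> 'I_N),
    is_proj_meas Q /\ (forall a, is_proj_meas (P a)) /\
    forall i a b, bprob (psi i) (P a b) (Q a) != 0 -> guess a b = i.

Definition oneway_proj_distinguishable (N dA dB : nat)
  (psi : 'I_N -> 'M[algC]_(dA, dB)) : Prop :=
  oneway_AtoB psi \/ oneway_BtoA psi.

(* Generalized Bell state psi_{nm} in C^4 (x) C^4:
   (1/2) sum_j e^{2 pi i j n/4} |j> |j+m mod 4>, with e^{2 pi i jn/4} = i^(jn). *)
Definition bell (n m : nat) : 'M[algC]_(4, 4) :=
  \matrix_(j < 4, k < 4)
    (if (k : nat) == ((j + m) %% 4)%N then 2^-1 * 'i ^+ (j * n) else 0).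

Definition bell_set : 'I_4 -> 'M[algC]_(4, 4) :=
  fun i => tnth [tuple bell 0 0; bell 0 2; bell 2 0; bell 2 2] i.

(** Both parties measure in the same orthonormal basis of C^4, the direct sum
    of two Hadamard bases on the blocks span(|0>,|1>) and span(|2>,|3>).
    For a product basis vector the outcome probability of a pure state is the
    squared modulus of its amplitude, and each of the sixteen outcome pairs
    (a, b) has nonzero amplitude on exactly one of the four Bell states:
    whether a and b lie in the same block reveals the shift m in {0, 2}, and
    whether their signs agree reveals the phase n in {0, 2}. *)
From mathcomp Require Import all_boot all_order all_algebra all_field.
From mathcomp Require Import ring.
Set Implicit Arguments. Unset Strict Implicit. Unset Printing Implicit Defensive.
Import Order.TTheory GRing.Theory Num.Theory.
Local Open Scope ring_scope.

Definition row_proj d (E : 'M[algC]_d) (a : 'I_d) : 'M[algC]_d :=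
  \matrix_(j, k) ((E a j)^* * E a k).

Definition row_amp dA dB (Psi : 'M[algC]_(dA, dB)) (E : 'M[algC]_dA)
    (F : 'M[algC]_dB) (a : 'I_dA) (b : 'I_dB) : algC :=
  \sum_(j < dA) \sum_(k < dB) E a j * F b k * Psi j k.

Lemma bprob_row_proj dA dB (Psi : 'M[algC]_(dA, dB)) (E : 'M_dA) (F : 'M_dB)
    a b :
  bprob Psi (row_proj E a) (row_proj F b) =
  (row_amp Psi E F a b)^* * row_amp Psi E F a b.
Proof.
rewrite /bprob /row_amp rmorph_sum mulr_suml; apply: eq_bigr => j _.
rewrite rmorph_sum mulr_suml; apply: eq_bigr => k _.
rewrite mulr_sumr; apply: eq_bigr => j' _.
rewrite mulr_sumr; apply: eq_bigr => k' _.
by rewrite !mxE !rmorphM /=; ring.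
Qed.

Lemma bprob_row_proj_eq0 dA dB (Psi : 'M[algC]_(dA, dB)) (E : 'M_dA)
    (F : 'M_dB) a b :
  (bprob Psi (row_proj E a) (row_proj F b) == 0) = (row_amp Psi E F a b == 0).
Proof. by rewrite bprob_row_proj mulrC mul_conjC_eq0. Qed.

Lemma row_ampZ dA dB (Psi : 'M[algC]_(dA, dB)) c c' (E : 'M_dA) (F : 'M_dB)
    a b :
  row_amp Psi (c *: E) (c' *: F) a b = c * c' * row_amp Psi E F a b.
Proof.
rewrite /row_amp mulr_sumr; apply: eq_bigr => j _.
by rewrite mulr_sumr; apply: eq_bigr => k _; rewrite !mxE; ring.
Qed.

Lemma row_proj_meas d (E : 'M[algC]_d) :
  E *m adjmx E = 1%:M -> is_proj_meas (row_proj E).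
Proof.
move=> unitaryE; have /matrixP adjE_E := mulmx1C unitaryE.
split=> [a|]; last first.
  apply/matrixP => j k; rewrite summxE -adjE_E mxE.
  by apply: eq_bigr => a _; rewrite !mxE.
split; apply/matrixP => j k; rewrite !mxE; last first.
  by rewrite rmorphM /= conjCK mulrC.
have normEa : \sum_(l < d) E a l * (E a l)^* = 1.
  move/matrixP/(_ a a): unitaryE; rewrite !mxE eqxx mulr1n => <-.
  by apply: eq_bigr => l _; rewrite !mxE.
rewrite -[RHS]mulr1 -normEa mulr_sumr; apply: eq_bigr => l _; rewrite !mxE.
ring.
Qed.

Lemma oneway_AtoB_row_proj N dA dB (psi : 'I_N -> 'M[algC]_(dA, dB))
    (E : 'M[algC]_dA) (F : 'M[algC]_dB) (guess : 'I_dA -> 'I_dB -> 'I_N) :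
  E *m adjmx E = 1%:M -> F *m adjmx F = 1%:M ->
  (forall i a b, row_amp (psi i) E F a b != 0 -> guess a b = i) ->
  oneway_AtoB psi.
Proof.
move=> unitaryE unitaryF guessP.
exists dA, dB, (row_proj E), (fun=> row_proj F), guess.
split; first exact: row_proj_meas.
split; first by move=> _; exact: row_proj_meas.
by move=> i a b; rewrite bprob_row_proj_eq0; exact: guessP.
Qed.

Lemma adjmxZ d (c : algC) (A : 'M[algC]_d) : adjmx (c *: A) = c^* *: adjmx A.
Proof. by apply/matrixP => j k; rewrite !mxE rmorphM. Qed.

(* Two unnormalised 2x2 Hadamard blocks: row a lives on the block a./2 and
   carries the sign pattern (1, (-1)^(odd a)). *)
Definition hadamard_sum : 'M[algC]_4 :=
  \matrix_(a, j) (if a./2 == j./2 then (-1) ^+ (odd a && odd j) else 0).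

Lemma adjmx_hadamard_sum : adjmx hadamard_sum = hadamard_sum.
Proof.
apply/matrixP => j k; rewrite !mxE eq_sym andbC.
by case: ifP => _; rewrite ?rmorph_sign ?rmorph0.
Qed.

Lemma hadamard_sum_sqr : hadamard_sum *m hadamard_sum = 2%:M.
Proof.
apply/matrixP => j k; rewrite !mxE !big_ord_recr big_ord0 /= !mxE.
by case: j => [[|[|[|[|//]]]] ?]; case: k => [[|[|[|[|//]]]] ?] /=; ring.
Qed.

Definition hadamard_basis : 'M[algC]_4 := (sqrtC 2)^-1 *: hadamard_sum.

Lemma hadamard_basis_unitary :
  hadamard_basis *m adjmx hadamard_basis = 1%:M.
Proof.
have real_c : ((sqrtC 2)^-1)^* = (sqrtC 2)^-1 :> algC.
  by rewrite geC0_conj // invr_ge0 sqrtC_ge0 ler0n.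
rewrite adjmxZ adjmx_hadamard_sum real_c -scalemxAl -scalemxAr hadamard_sum_sqr.
by rewrite scalerA scale_scalar_mx -expr2 exprVn sqrtCK mulVf ?pnatr_eq0.
Qed.

Lemma row_amp_bell n m (E F : 'M[algC]_4) a b :
  row_amp (bell n m) E F a b =
  2^-1 * \sum_(j < 4) 'i ^+ (j * n) * E a j * F b (inZp (j + m)).
Proof.
rewrite /row_amp mulr_sumr; apply: eq_bigr => j _.
rewrite (bigD1 (inZp (j + m))) //= big1 => [|k k_neq].
  by rewrite !mxE eqxx addr0; ring.
by rewrite !mxE ifN ?mulr0.
Qed.

Lemma bell_setE i : bell_set i = bell (i./2).*2 (odd i).*2.
Proof. by case: i => [[|[|[|[|//]]]] ?]. Qed.

Lemma row_amp_bell_set i (E F : 'M[algC]_4) a b :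
  row_amp (bell_set i) E F a b =
  2^-1 * \sum_(j < 4)
    (-1) ^+ (odd j && odd i./2) * E a j * F b (inZp (j + (odd i).*2)).
Proof.
rewrite bell_setE row_amp_bell; congr (_ * _); apply: eq_bigr => j _.
by rewrite -mul2n mulnCA exprM sqrCi -[in LHS]signr_odd oddM.
Qed.

(* Outcomes in the same block mean shift 0, equal signs mean phase 0. *)
Definition bell_guess (a b : 'I_4) : 'I_4 :=
  inord ((odd a != odd b).*2 + (a./2 != b./2)).

Lemma bell_guessP i a b :
  row_amp (bell_set i) hadamard_sum hadamard_sum a b != 0 -> bell_guess a b = i.
Proof.
move=> amp_neq0; apply: val_inj; rewrite /= inordK; last first.
  by case: (odd a != odd b); case: (a./2 != b./2).
move: amp_neq0; apply: contraNeq => guess_neq; apply/eqP.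
rewrite row_amp_bell_set !big_ord_recr big_ord0 /= !mxE.
move: guess_neq; case: i => [[|[|[|[|//]]]] ?]; case: a => [[|[|[|[|//]]]] ?];
  case: b => [[|[|[|[|//]]]] ?] => //= _; rewrite /modn /=; ring.
Qed.

Theorem theorem8 : oneway_proj_distinguishable bell_set.
Proof.
left; apply: (oneway_AtoB_row_proj (guess := bell_guess) hadamard_basis_unitary
  hadamard_basis_unitary) => i a b.
rewrite row_ampZ mulf_eq0 negb_or => /andP[_].
exact: bell_guessP.
Qed.
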